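(* Let $(\Sigma_+,\Sigma_-,N_1,N_2,N_3)$ be a solution of the Wainwright–Hsu system satisfying the constraint, with $N_1=0$, $N_2,N_3>0$, and $\Sigma_-^2+(N_2-N_3)^2>0$. Then there is $n_0\in(0,\infty)$ such that $\lim_{\tau\to\infty}N_2(\tau)=\lim_{\tau\to\infty}N_3(\tau)=n_0$.
   Context: Wainwright–Hsu system: for functions $N_1,N_2,N_3,\Sigma_+,\Sigma_-$ of $\tau\in\mathbb{R}$ (prime denotes $d/d\tau$), $N_1'=(q-4\Sigma_+)N_1$, $N_2'=(q+2\Sigma_++2\sqrt3\Sigma_-)N_2$, $N_3'=(q+2\Sigma_+-2\sqrt3\Sigma_-)N_3$, $\Sigma_+'=-(2-q)\Sigma_+-3S_+$, $\Sigma_-'=-(2-q)\Sigma_--3S_-$, where $q=2(\Sigma_+^2+\Sigma_-^2)$, $S_+=\frac12[(N_2-N_3)^2-N_1(2N_1-N_2-N_3)]$, $S_-=\frac{\sqrt3}{2}(N_3-N_2)(N_1-N_2-N_3)$, together with the constraint $\Sigma_+^2+\Sigma_-^2+\frac34[N_1^2+N_2^2+N_3^2-2(N_1N_2+N_2N_3+N_1N_3)]=1$. Solutions exist for all $\tau\in\mathbb{R}$; the condition $\Sigma_-^2+(N_2-N_3)^2>0$ is preserved by the flow. *)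

From Stdlib Require Import Reals.
From Coquelicot Require Import Coquelicot.
Open Scope R_scope.

Definition WH_q (Sp Sm : R) : R := 2 * (Sp ^ 2 + Sm ^ 2).

Definition WH_Splus (N1 N2 N3 : R) : R :=
  / 2 * ((N2 - N3) ^ 2 - N1 * (2 * N1 - N2 - N3)).

Definition WH_Sminus (N1 N2 N3 : R) : R :=
  sqrt 3 / 2 * (N3 - N2) * (N1 - N2 - N3).

Definition WH_solution (N1 N2 N3 Sp Sm : R -> R) : Prop :=
  forall t : R,
    is_derive N1 t ((WH_q (Sp t) (Sm t) - 4 * Sp t) * N1 t) /\
    is_derive N2 t ((WH_q (Sp t) (Sm t) + 2 * Sp t + 2 * sqrt 3 * Sm t) * N2 t) /\
    is_derive N3 t ((WH_q (Sp t) (Sm t) + 2 * Sp t - 2 * sqrt 3 * Sm t) * N3 t) /\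
    is_derive Sp t (- (2 - WH_q (Sp t) (Sm t)) * Sp t
                    - 3 * WH_Splus (N1 t) (N2 t) (N3 t)) /\
    is_derive Sm t (- (2 - WH_q (Sp t) (Sm t)) * Sm t
                    - 3 * WH_Sminus (N1 t) (N2 t) (N3 t)).

Definition WH_constraint (N1 N2 N3 Sp Sm : R -> R) : Prop :=
  forall t : R,
    Sp t ^ 2 + Sm t ^ 2
    + 3 / 4 * (N1 t ^ 2 + N2 t ^ 2 + N3 t ^ 2
               - 2 * (N1 t * N2 t + N2 t * N3 t + N1 t * N3 t)) = 1.

From Stdlib Require Import Reals Lra Psatz Classical.
From Coquelicot Require Import Coquelicot.
Open Scope R_scope.

(* Write x = 1 + Sp and w = N2 - N3.  With N1 = 0 the constraint reads
   Sm^2 + 3/4 w^2 = x (2 - x), and x' = -3/2 w^2 x, so x is nonincreasing and,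
   away from the equilibrium, stays in (0, 2).  With y = Sm w / (N2 + N3),
   Phi = ln (N2 N3) - y / sqrt 3 is nondecreasing, which bounds N2 N3 from below.
   Since ln (N2 N3 / x^2) has derivative 4 x, eventually x / (N2 N3) is small;
   from then on Omega = (1 + y / (2 sqrt 3)) / x grows linearly while
   Omega <= 1 / x + c, so x <= 1 / (1 + kappa t).  Now Phi' = O(x^2) is
   integrable and Phi converges; w^2 and y^2 are O(x), so w and y tend to 0.
   Hence N2 N3 = exp (Phi + y / sqrt 3) converges to a positive limit, and N2, N3,
   whose difference tends to 0, both tend to its square root. *)

Lemma nondecreasing_of_derive_nonneg (f df : R -> R) a :
  (forall t, a <= t -> is_derive f t (df t)) -> (forall t, a <= t -> 0 <= df t) ->
  forall u v, a <= u -> u <= v -> f u <= f v.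
Proof.
  intros Hd Hp u v Hu Huv.
  destruct (Req_dec u v) as [->|Hne]; [lra|].
  destruct (MVT_cor2 f df u v) as [c [Hc Hc2]]; [lra| |].
  - intros c Hc. apply is_derive_Reals, Hd. lra.
  - assert (0 <= df c * (v - u)) by (apply Rmult_le_pos; [apply Hp|]; lra). lra.
Qed.

Lemma increment_le_of_derive_le (f g df dg : R -> R) a :
  (forall t, a <= t -> is_derive f t (df t)) ->
  (forall t, a <= t -> is_derive g t (dg t)) ->
  (forall t, a <= t -> df t <= dg t) ->
  forall t, a <= t -> f t - f a <= g t - g a.
Proof.
  intros Hf Hg Hle t Ht.
  enough (g a - f a <= g t - f t) by lra.
  apply (nondecreasing_of_derive_nonneg (fun s => g s - f s) (fun s => dg s - df s) a);
    try lra.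
  - intros s Hs. exact (is_derive_minus g f s _ _ (Hg s Hs) (Hf s Hs)).
  - intros s Hs. specialize (Hle s Hs). lra.
Qed.

Lemma affine_le_of_derive_ge (f df : R -> R) a c :
  (forall t, a <= t -> is_derive f t (df t)) -> (forall t, a <= t -> c <= df t) ->
  forall t, a <= t -> f a + c * (t - a) <= f t.
Proof.
  intros Hf Hc t Ht.
  enough (c * t - c * a <= f t - f a) by lra.
  apply (increment_le_of_derive_le (fun s => c * s) f (fun _ => c) df a); auto.
  intros s _. auto_derive; [exact I | ring].
Qed.

Lemma exp_le_compat a b : a <= b -> exp a <= exp b.
Proof.
  intro Hab. destruct (Rle_lt_or_eq_dec a b Hab) as [Hlt | ->]; [|lra].
  now apply Rlt_le, exp_increasing.
Qed.

Lemma is_lim_of_nondecreasing_bounded (f : R -> R) a B :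
  (forall u v, a <= u -> u <= v -> f u <= f v) -> (forall t, a <= t -> f t <= B) ->
  exists l : R, is_lim f p_infty l.
Proof.
  intros Hm HB.
  set (E := fun z => exists t, a <= t /\ z = f t).
  destruct (completeness E) as [l [Hub Hlub]].
  - exists B. intros z [t [Ht ->]]. auto.
  - exists (f a), a. split; lra.
  - exists l. apply is_lim_spec. intros [eps Heps]. simpl.
    assert (exists t, a <= t /\ l - eps < f t) as [t1 [Ht1 Hf1]].
    { apply NNPP. intro Hn. enough (l <= l - eps) by lra.
      apply Hlub. intros z [t [Ht ->]]. apply Rnot_lt_le. intro. apply Hn. eauto. }
    exists (Rmax a t1). intros t Ht.
    pose proof (Rmax_l a t1). pose proof (Rmax_r a t1).
    assert (f t1 <= f t) by (apply Hm; lra).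
    assert (f t <= l) by (apply Hub; exists t; split; [lra | auto]).
    apply Rabs_lt_between'. lra.
Qed.

Lemma is_lim_0_of_sqr_le_inv_affine (g : R -> R) T K k :
  0 < K -> 0 < k -> (forall t, T <= t -> g t ^ 2 <= K / (1 + k * (t - T))) ->
  is_lim g p_infty 0.
Proof.
  intros HK Hk Hg. apply is_lim_spec. intros [e He]. simpl.
  exists (T + K / (k * (e * e))). intros t Ht.
  assert (Hke : 0 < k * (e * e)) by (apply Rmult_lt_0_compat; nra).
  assert (HK' : K < k * (e * e) * (t - T)).
  { apply (Rmult_lt_compat_l (k * (e * e))) in Ht; [|exact Hke].
    replace (k * (e * e) * (T + K / (k * (e * e)))) with (k * (e * e) * T + K) in Ht
      by (field; lra).
    lra. }
  assert (K / (1 + k * (t - T)) < e * e) by (apply Rlt_div_l; nra).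
  specialize (Hg t ltac:(nra)).
  rewrite Rminus_0_r. apply Rabs_lt_between. split; nra.
Qed.

Lemma is_lim_of_diff_prod (f g : R -> R) (p : R) :
  (forall t, 0 < f t) -> (forall t, 0 < g t) ->
  is_lim (fun t => f t - g t) p_infty 0 -> is_lim (fun t => f t * g t) p_infty p ->
  is_lim f p_infty (sqrt p) /\ is_lim g p_infty (sqrt p).
Proof.
  intros Hf Hg Hd Hp.
  (* [f + g = sqrt ((f - g)^2 + 4 f g)] *)
  assert (Hs : is_lim (fun t => sqrt ((f t - g t) * (f t - g t) + 4 * (f t * g t))) p_infty
                 (sqrt (0 * 0 + 4 * p))).
  { apply (is_lim_comp_continuous (fun t => (f t - g t) * (f t - g t) + 4 * (f t * g t))).
    - apply is_lim_plus'.
      + exact (is_lim_mult _ _ _ 0 0 Hd Hd I).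
      + exact (is_lim_scal_l _ 4 _ p Hp).
    - apply continuous_sqrt. }
  assert (Esum : forall t, sqrt ((f t - g t) * (f t - g t) + 4 * (f t * g t)) = f t + g t).
  { intro t. pose proof (Hf t). pose proof (Hg t).
    replace ((f t - g t) * (f t - g t) + 4 * (f t * g t)) with ((f t + g t) * (f t + g t))
      by ring.
    apply sqrt_square. lra. }
  assert (Hsum : is_lim (fun t => f t + g t) p_infty (sqrt (0 * 0 + 4 * p))).
  { eapply is_lim_ext; [exact Esum | exact Hs]. }
  assert (E2 : sqrt (0 * 0 + 4 * p) = 2 * sqrt p).
  { rewrite Rmult_0_l, Rplus_0_l, sqrt_mult_alt by lra.
    replace 4 with (2 * 2) by ring. rewrite sqrt_square; lra. }
  rewrite E2 in Hsum.
  split.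
  - apply (is_lim_ext (fun t => / 2 * ((f t + g t) + (f t - g t)))); [intro t; field|].
    replace (sqrt p) with (/ 2 * (2 * sqrt p + 0)) by field.
    apply (is_lim_scal_l _ (/ 2) _ (2 * sqrt p + 0)), is_lim_plus'; auto.
  - apply (is_lim_ext (fun t => / 2 * ((f t + g t) - (f t - g t)))); [intro t; field|].
    replace (sqrt p) with (/ 2 * (2 * sqrt p - 0)) by field.
    apply (is_lim_scal_l _ (/ 2) _ (2 * sqrt p - 0)), is_lim_minus'; auto.
Qed.

Section WainwrightHsuN1Zero.

Variables N1 N2 N3 Sp Sm : R -> R.
Hypothesis solution : WH_solution N1 N2 N3 Sp Sm.
Hypothesis constraint : WH_constraint N1 N2 N3 Sp Sm.
Hypothesis N1_zero : forall t, N1 t = 0.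
Hypothesis N2_pos : forall t, 0 < N2 t.
Hypothesis N3_pos : forall t, 0 < N3 t.

Definition X t := 1 + Sp t.
Definition W t := N2 t - N3 t.
Definition N2N3 t := N2 t * N3 t.
Definition Y t := Sm t * W t / (N2 t + N3 t).

Lemma sqrt3_pos : 0 < sqrt 3.
Proof. apply sqrt_lt_R0. lra. Qed.

Lemma sqrt3_sqr : sqrt 3 * sqrt 3 = 3.
Proof. apply sqrt_sqrt. lra. Qed.

Lemma sqrt3_half : sqrt 3 / 2 = 3 / (2 * sqrt 3).
Proof. pose proof sqrt3_pos. rewrite <- sqrt3_sqr at 2. field. lra. Qed.

Lemma N2N3_pos t : 0 < N2N3 t.
Proof. apply Rmult_lt_0_compat; auto. Qed.

Lemma constraint_reduced t : Sm t ^ 2 + 3 / 4 * W t ^ 2 = X t * (2 - X t).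
Proof. pose proof (constraint t) as C. rewrite N1_zero in C. unfold X, W. lra. Qed.

Lemma WH_q_reduced t : WH_q (Sp t) (Sm t) = 2 - 3 / 2 * W t ^ 2.
Proof. pose proof (constraint_reduced t). unfold WH_q, X in *. lra. Qed.

Lemma ex_derive_N2 t : ex_derive N2 t.
Proof. destruct (solution t) as (_ & D & _). exact (ex_intro _ _ D). Qed.
Lemma ex_derive_N3 t : ex_derive N3 t.
Proof. destruct (solution t) as (_ & _ & D & _). exact (ex_intro _ _ D). Qed.
Lemma ex_derive_Sp t : ex_derive Sp t.
Proof. destruct (solution t) as (_ & _ & _ & D & _). exact (ex_intro _ _ D). Qed.
Lemma ex_derive_Sm t : ex_derive Sm t.
Proof. destruct (solution t) as (_ & _ & _ & _ & D). exact (ex_intro _ _ D). Qed.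

(* Stated for the eta-expanded functions, which is the form [auto_derive] leaves. *)
Lemma Derive_N2 t :
  Derive (fun s => N2 s) t = (2 * X t - 3 / 2 * W t ^ 2 + 2 * sqrt 3 * Sm t) * N2 t.
Proof.
  destruct (solution t) as (_ & D & _).
  rewrite (is_derive_unique (fun s : R => _ s) _ _ D), WH_q_reduced.
  unfold X. ring.
Qed.

Lemma Derive_N3 t :
  Derive (fun s => N3 s) t = (2 * X t - 3 / 2 * W t ^ 2 - 2 * sqrt 3 * Sm t) * N3 t.
Proof.
  destruct (solution t) as (_ & _ & D & _).
  rewrite (is_derive_unique (fun s : R => _ s) _ _ D), WH_q_reduced.
  unfold X. ring.
Qed.

Lemma Derive_Sp t : Derive (fun s => Sp s) t = - (3 / 2 * W t ^ 2 * X t).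
Proof.
  destruct (solution t) as (_ & _ & _ & D & _).
  rewrite (is_derive_unique (fun s : R => _ s) _ _ D), WH_q_reduced.
  unfold WH_Splus, X, W. rewrite N1_zero. field.
Qed.

Lemma Derive_Sm t :
  Derive (fun s => Sm s) t =
    - (3 / 2 * W t ^ 2 * Sm t) - 3 * sqrt 3 / 2 * W t * (N2 t + N3 t).
Proof.
  destruct (solution t) as (_ & _ & _ & _ & D).
  rewrite (is_derive_unique (fun s : R => _ s) _ _ D), WH_q_reduced.
  unfold WH_Sminus, W. rewrite N1_zero. field.
Qed.

Ltac derive_reduced :=
  auto_derive;
  [ repeat split; try exact I;
    auto using ex_derive_N2, ex_derive_N3, ex_derive_Sp, ex_derive_Sm
  | rewrite ?Derive_N2, ?Derive_N3, ?Derive_Sp, ?Derive_Sm ].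

Lemma is_derive_X t : is_derive X t (- (3 / 2 * W t ^ 2 * X t)).
Proof. unfold X. derive_reduced. unfold X. ring. Qed.

Definition Phi t := ln (N2N3 t) - Y t / sqrt 3.
Definition dPhi t := 2 * X t ^ 2 + 2 * Y t ^ 2 + sqrt 3 / 2 * W t ^ 2 * Y t.
Definition Omega t := (1 + Y t / (2 * sqrt 3)) / X t.
Definition L t := ln (N2N3 t) - 2 * ln (X t).

Lemma is_derive_Phi t : is_derive Phi t (dPhi t).
Proof.
  pose proof (N2_pos t). pose proof (N3_pos t). pose proof sqrt3_pos.
  pose proof (constraint_reduced t) as C.
  unfold Phi, dPhi, N2N3, Y, W. derive_reduced.
  - apply Rmult_lt_0_compat; lra.
  - lra.
  - (* the identity holds only modulo the constraint, inserted as a vanishing term *)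
    rewrite sqrt3_half.
    replace (2 * X t ^ 2) with (2 * X t ^ 2 - 2 * (Sm t ^ 2 + 3 / 4 * W t ^ 2 - X t * (2 - X t)))
      by (rewrite C; ring).
    unfold W. field. lra.
Qed.

Lemma is_derive_Omega t : 0 < X t -> is_derive Omega t (2 - X t - Y t ^ 2 / X t).
Proof.
  intro Hx. pose proof (N2_pos t). pose proof (N3_pos t). pose proof sqrt3_pos.
  pose proof (constraint_reduced t) as C.
  unfold Omega, Y, W. unfold X at 1. derive_reduced.
  - lra.
  - unfold X in Hx. lra.
  - replace (2 - X t) with (2 - X t + (Sm t ^ 2 + 3 / 4 * W t ^ 2 - X t * (2 - X t)) / X t)
      by (rewrite C; field; lra).
    unfold W, X in *. field. repeat split; lra.
Qed.

Lemma is_derive_L t : 0 < X t -> is_derive L t (4 * X t).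
Proof.
  intro Hx. pose proof (N2_pos t). pose proof (N3_pos t).
  unfold L, N2N3. unfold X at 1. derive_reduced.
  - apply Rmult_lt_0_compat; lra.
  - unfold X in *. field. repeat split; lra.
Qed.

Lemma X_bounds t : 0 <= X t <= 2.
Proof.
  pose proof (constraint_reduced t). pose proof (pow2_ge_0 (Sm t)). pose proof (pow2_ge_0 (W t)).
  nra.
Qed.

Lemma Sm_sqr_le t : Sm t ^ 2 <= X t * (2 - X t).
Proof. pose proof (constraint_reduced t). pose proof (pow2_ge_0 (W t)). lra. Qed.

Lemma W_sqr_le t : W t ^ 2 <= 8 / 3 * X t.
Proof.
  pose proof (constraint_reduced t). pose proof (X_bounds t). pose proof (pow2_ge_0 (Sm t)).
  nra.
Qed.

Lemma Sm_W_sqr_le t : Sm t ^ 2 * W t ^ 2 <= 4 / 3 * X t ^ 2.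
Proof.
  pose proof (constraint_reduced t) as C. pose proof (X_bounds t).
  (* AM-GM on [Sm^2] and [3/4 W^2], whose sum is [X (2 - X) <= 2 X] *)
  assert (Sm t ^ 2 * (3 / 4 * W t ^ 2) <= (X t * (2 - X t) / 2) ^ 2).
  { rewrite <- C. pose proof (pow2_ge_0 (Sm t ^ 2 - 3 / 4 * W t ^ 2)). nra. }
  assert (X t * (2 - X t) / 2 <= X t) by nra.
  assert (0 <= X t * (2 - X t) / 2) by nra.
  nra.
Qed.

Lemma Y_sqr_eq t : Y t ^ 2 = Sm t ^ 2 * W t ^ 2 / (N2 t + N3 t) ^ 2.
Proof. pose proof (N2_pos t). pose proof (N3_pos t). unfold Y. field. lra. Qed.

Lemma Y_sqr_le_Sm_sqr t : Y t ^ 2 <= Sm t ^ 2.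
Proof.
  pose proof (N2_pos t). pose proof (N3_pos t).
  rewrite Y_sqr_eq. apply Rle_div_l; [apply pow_lt; lra|].
  apply Rmult_le_compat_l; [apply pow2_ge_0|]. unfold W. nra.
Qed.

Lemma Y_sqr_le t : Y t ^ 2 <= X t ^ 2 / (3 * N2N3 t).
Proof.
  pose proof (N2_pos t). pose proof (N3_pos t). pose proof (N2N3_pos t).
  pose proof (Sm_W_sqr_le t).
  assert (Hs : 4 * N2N3 t <= (N2 t + N3 t) ^ 2)
    by (unfold N2N3; pose proof (pow2_ge_0 (N2 t - N3 t)); nra).
  assert (Hc : 0 <= X t ^ 2 / (3 * N2N3 t)).
  { apply Rmult_le_pos; [apply pow2_ge_0 | apply Rlt_le, Rinv_0_lt_compat; lra]. }
  assert (X t ^ 2 / (3 * N2N3 t) * (4 * N2N3 t) = 4 / 3 * X t ^ 2) by (field; lra).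
  assert (X t ^ 2 / (3 * N2N3 t) * (4 * N2N3 t) <= X t ^ 2 / (3 * N2N3 t) * (N2 t + N3 t) ^ 2)
    by (apply Rmult_le_compat_l; assumption).
  rewrite Y_sqr_eq. apply Rle_div_l; [apply pow_lt|]; lra.
Qed.

Lemma dPhi_bounds t : 0 <= dPhi t <= 14 / 3 * X t ^ 2 + 5 / 2 * Y t ^ 2.
Proof.
  pose proof (W_sqr_le t). pose proof (X_bounds t). pose proof (pow2_ge_0 (W t)).
  set (b := sqrt 3 / 2 * W t ^ 2).
  assert (Hb : b ^ 2 <= 16 / 3 * X t ^ 2).
  { replace (b ^ 2) with (3 / 4 * (W t ^ 2) ^ 2)
      by (unfold b; rewrite <- sqrt3_sqr at 1; field).
    nra. }
  unfold dPhi. fold b.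
  pose proof (pow2_ge_0 (b + 4 * Y t)). pose proof (pow2_ge_0 (b - Y t)).
  split; nra.
Qed.

Lemma X_nonincreasing u v : u <= v -> X v <= X u.
Proof.
  intro Huv. enough (- X u <= - X v) by lra.
  apply (nondecreasing_of_derive_nonneg (fun s => - X s)
           (fun s => - - (3 / 2 * W s ^ 2 * X s)) u); try lra.
  - intros s _. exact (is_derive_opp X s _ (is_derive_X s)).
  - intros s _. pose proof (X_bounds s). pose proof (pow2_ge_0 (W s)). nra.
Qed.

Lemma X_pos_of_pos t0 t : 0 < X t0 -> t0 <= t -> 0 < X t.
Proof.
  intros H0 Ht.
  (* [X' >= -8 X], so [X e^{8t}] is nondecreasing *)
  assert (X t0 * exp (8 * t0) <= X t * exp (8 * t)).
  { apply (nondecreasing_of_derive_nonneg (fun s => X s * exp (8 * s))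
             (fun s => (8 - 3 / 2 * W s ^ 2) * X s * exp (8 * s)) t0); try lra.
    - intros s _. auto_derive.
      + exact (ex_intro _ _ (is_derive_X s)).
      + rewrite (is_derive_unique (fun s : R => X s) _ _ (is_derive_X s)). ring.
    - intros s _. pose proof (X_bounds s). pose proof (W_sqr_le s). pose proof (exp_pos (8 * s)).
      apply Rmult_le_pos; [apply Rmult_le_pos|]; lra. }
  pose proof (exp_pos (8 * t0)). pose proof (exp_pos (8 * t)).
  assert (0 < X t * exp (8 * t)) by nra.
  nra.
Qed.

Lemma Phi_nondecreasing u v : u <= v -> Phi u <= Phi v.
Proof.
  intro Huv. apply (nondecreasing_of_derive_nonneg Phi dPhi u); try lra.
  - intros s _. apply is_derive_Phi.
  - intros s _. apply dPhi_bounds.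
Qed.

Lemma ln_N2N3_eq t : ln (N2N3 t) = Phi t + Y t / sqrt 3.
Proof. unfold Phi. ring. Qed.

Lemma Y_div_sqrt3_bounds t : -1 <= Y t / sqrt 3 <= 1.
Proof.
  pose proof (Y_sqr_le_Sm_sqr t). pose proof (Sm_sqr_le t). pose proof sqrt3_pos.
  assert (Hy : Y t ^ 2 <= 1) by (pose proof (pow2_ge_0 (X t - 1)); nra).
  assert (E : (Y t / sqrt 3) ^ 2 = Y t ^ 2 / 3) by (rewrite <- sqrt3_sqr at 2; field; lra).
  assert ((Y t / sqrt 3) ^ 2 <= 1) by (rewrite E; lra).
  split; nra.
Qed.

Lemma N2N3_ge_exp_Phi t0 t : t0 <= t -> exp (Phi t0 - 1) <= N2N3 t.
Proof.
  intro Ht. rewrite <- (exp_ln (N2N3 t)) by apply N2N3_pos.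
  apply exp_le_compat. rewrite ln_N2N3_eq.
  pose proof (Phi_nondecreasing t0 t Ht). pose proof (Y_div_sqrt3_bounds t). lra.
Qed.

Lemma Y_div_X_sqr_le t : 0 < X t -> (Y t / X t) ^ 2 <= / (3 * N2N3 t).
Proof.
  intro Hx. pose proof (Y_sqr_le t). pose proof (N2N3_pos t).
  replace ((Y t / X t) ^ 2) with (Y t ^ 2 / X t ^ 2) by (field; lra).
  apply Rle_div_l; [nra|].
  replace (/ (3 * N2N3 t) * X t ^ 2) with (X t ^ 2 / (3 * N2N3 t)) by (field; lra). assumption.
Qed.

Lemma dOmega_ge kap t :
  0 < X t -> X t / (3 * N2N3 t) <= kap -> 2 - X t - kap <= 2 - X t - Y t ^ 2 / X t.
Proof.
  intros Hx Hk. pose proof (Y_div_X_sqr_le t Hx). pose proof (N2N3_pos t).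
  replace (Y t ^ 2 / X t) with (X t * (Y t / X t) ^ 2) by (field; lra).
  replace (X t / (3 * N2N3 t)) with (X t * / (3 * N2N3 t)) in Hk by reflexivity.
  enough (X t * (Y t / X t) ^ 2 <= X t * / (3 * N2N3 t)) by lra.
  apply Rmult_le_compat_l; lra.
Qed.

Lemma Omega_le nmin t :
  0 < nmin -> 0 < X t -> nmin <= N2N3 t -> Omega t <= / X t + (/ (36 * nmin) + 1).
Proof.
  intros Hm Hx Hn. pose proof (Y_div_X_sqr_le t Hx). pose proof (N2N3_pos t). pose proof sqrt3_pos.
  set (z := Y t / X t / (2 * sqrt 3)).
  assert (HO : Omega t = / X t + z) by (unfold Omega, z; field; lra).
  assert (Hz : z ^ 2 = (Y t / X t) ^ 2 / 12).
  { unfold z. replace 12 with (4 * (sqrt 3 * sqrt 3)) by (rewrite sqrt3_sqr; ring). field. lra. }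
  assert (/ (3 * N2N3 t) <= / (3 * nmin)) by (apply Rinv_le_contravar; lra).
  assert (/ (3 * nmin) / 12 = / (36 * nmin)) by (field; lra).
  pose proof (pow2_ge_0 (z - 1 / 2)).
  nra.
Qed.

Variable t0 : R.
Hypothesis nondegenerate_at_t0 : Sm t0 ^ 2 + (N2 t0 - N3 t0) ^ 2 > 0.

Lemma X_t0_bounds : 0 < X t0 < 2.
Proof.
  pose proof (constraint_reduced t0). pose proof (X_bounds t0).
  pose proof (pow2_ge_0 (Sm t0)). pose proof (pow2_ge_0 (W t0)).
  assert (0 < X t0 * (2 - X t0)) by (unfold W in *; nra).
  nra.
Qed.

Lemma X_pos t : t0 <= t -> 0 < X t.
Proof. apply X_pos_of_pos, X_t0_bounds. Qed.

Let N2N3_min := exp (Phi t0 - 1).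

Lemma N2N3_min_pos : 0 < N2N3_min.
Proof. apply exp_pos. Qed.

Lemma N2N3_ge_min t : t0 <= t -> N2N3_min <= N2N3 t.
Proof. apply N2N3_ge_exp_Phi. Qed.

Lemma N2N3_ge_of_L_ge t M : 0 < X t -> M <= L t -> X t ^ 2 * exp M <= N2N3 t.
Proof.
  intros Hx HM.
  rewrite <- (exp_ln (N2N3 t)) by apply N2N3_pos.
  replace (ln (N2N3 t)) with (L t + (ln (X t) + ln (X t))) by (unfold L; ring).
  rewrite !exp_plus, exp_ln by exact Hx.
  pose proof (exp_le_compat _ _ HM). nra.
Qed.

Lemma X_div_N2N3_eventually_le kap :
  0 < kap -> exists T, t0 <= T /\ forall t, T <= t -> X t / (3 * N2N3 t) <= kap.
Proof.
  intro Hk. pose proof N2N3_min_pos as Hmin.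
  destruct (classic (exists T, t0 <= T /\ X T <= 3 * N2N3_min * kap)) as [[T [HT HXT]] | Hno].
  - exists T. split; [exact HT|]. intros t Ht.
    pose proof (X_nonincreasing T t Ht). pose proof (N2N3_ge_min t ltac:(lra)).
    pose proof (N2N3_pos t).
    apply Rle_div_l; nra.
  - (* otherwise [X > eps] for ever, so [L = ln (N2 N3 / X^2)] grows linearly *)
    set (eps := 3 * N2N3_min * kap).
    assert (Heps : 0 < eps) by (unfold eps; nra).
    assert (Hgt : forall t, t0 <= t -> eps < X t).
    { intros t Ht. apply Rnot_le_lt. intro. apply Hno. eauto. }
    assert (HL : forall t, t0 <= t -> L t0 + 4 * eps * (t - t0) <= L t).
    { apply (affine_le_of_derive_ge L (fun s => 4 * X s)).
      - intros s Hs. apply is_derive_L, X_pos, Hs.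
      - intros s Hs. pose proof (Hgt s Hs). lra. }
    set (M := ln (/ (eps * kap))).
    assert (HeM : exp M = / (eps * kap)) by (apply exp_ln, Rinv_0_lt_compat; nra).
    exists (t0 + Rabs (M - L t0) / (4 * eps)).
    assert (0 <= Rabs (M - L t0) / (4 * eps))
      by (apply Rmult_le_pos; [apply Rabs_pos | apply Rlt_le, Rinv_0_lt_compat; lra]).
    split; [lra|]. intros t Ht.
    assert (HMt : M <= L t).
    { pose proof (HL t ltac:(lra)). pose proof (Rle_abs (M - L t0)).
      assert (4 * eps * (Rabs (M - L t0) / (4 * eps)) = Rabs (M - L t0)) by (field; lra).
      nra. }
    pose proof (Hgt t ltac:(lra)). pose proof (N2N3_pos t).
    pose proof (N2N3_ge_of_L_ge t M ltac:(lra) HMt) as HN. rewrite HeM in HN.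
    assert (X t ^ 2 <= N2N3 t * (eps * kap)).
    { replace (X t ^ 2) with (X t ^ 2 * / (eps * kap) * (eps * kap)) by (field; nra).
      apply Rmult_le_compat_r; nra. }
    apply Rle_div_l; nra.
Qed.

Lemma X_le_inv_affine :
  exists T kap, t0 <= T /\ 0 < kap /\ forall t, T <= t -> X t <= / (1 + kap * (t - T)).
Proof.
  pose proof X_t0_bounds as Hx0.
  set (kap := (2 - X t0) / 2).
  assert (Hk : 0 < kap) by (unfold kap; lra).
  destruct (X_div_N2N3_eventually_le kap Hk) as [T [HT HTk]].
  (* [Omega] grows at least linearly, while [Omega <= 1 / X + c] *)
  assert (HOm : forall t, T <= t -> Omega T + kap * (t - T) <= Omega t).
  { apply (affine_le_of_derive_ge Omega (fun s => 2 - X s - Y s ^ 2 / X s)).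
    - intros s Hs. apply is_derive_Omega, X_pos. lra.
    - intros s Hs. pose proof (dOmega_ge kap s (X_pos s ltac:(lra)) (HTk s Hs)).
      pose proof (X_nonincreasing t0 s ltac:(lra)). unfold kap in *. lra. }
  pose proof N2N3_min_pos as Hmin.
  set (c := / (36 * N2N3_min) + 1).
  set (T2 := T + Rabs (c - Omega T + 1) / kap).
  assert (HT2 : kap * (T2 - T) = Rabs (c - Omega T + 1)) by (unfold T2; field; lra).
  assert (HTT2 : T <= T2).
  { unfold T2. assert (0 <= Rabs (c - Omega T + 1) / kap)
      by (apply Rdiv_le_0_compat; [apply Rabs_pos | lra]).
    lra. }
  pose proof (Rle_abs (c - Omega T + 1)).
  exists T2, kap. split; [lra|]. split; [exact Hk|]. intros t Ht.
  pose proof (HOm t ltac:(lra)).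
  pose proof (X_pos t ltac:(lra)).
  pose proof (Omega_le N2N3_min t Hmin ltac:(lra) (N2N3_ge_min t ltac:(lra))) as HOmle.
  fold c in HOmle.
  rewrite <- (Rinv_inv (X t)). apply Rinv_le_contravar; nra.
Qed.

Lemma dPhi_le t : t0 <= t -> dPhi t <= (14 / 3 + 5 / (6 * N2N3_min)) * X t ^ 2.
Proof.
  intro Ht. pose proof (dPhi_bounds t). pose proof (Y_sqr_le t).
  pose proof (N2N3_ge_min t Ht). pose proof (N2N3_pos t). pose proof (pow2_ge_0 (X t)).
  pose proof N2N3_min_pos as Hmin.
  assert (X t ^ 2 / (3 * N2N3 t) <= X t ^ 2 / (3 * N2N3_min)).
  { apply Rmult_le_compat_l; [lra|]. apply Rinv_le_contravar; lra. }
  assert (X t ^ 2 / (3 * N2N3_min) * (5 / 2) = 5 / (6 * N2N3_min) * X t ^ 2) by (field; lra).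
  lra.
Qed.

Lemma Phi_has_limit : exists l : R, is_lim Phi p_infty l.
Proof.
  destruct X_le_inv_affine as [T [kap [HT [Hk HX]]]].
  pose proof N2N3_min_pos as Hmin.
  set (C := 14 / 3 + 5 / (6 * N2N3_min)).
  assert (0 < 5 / (6 * N2N3_min)) by (apply Rdiv_lt_0_compat; lra).
  assert (HC : 0 < C) by (unfold C; lra).
  (* [dPhi <= C X^2 <= C / (1 + kap (t - T))^2] is integrable *)
  assert (Hinc : forall t, T <= t ->
    Phi t - Phi T <= - (C / kap / (1 + kap * (t - T))) - - (C / kap / (1 + kap * (T - T)))).
  { apply (increment_le_of_derive_le Phi (fun s => - (C / kap / (1 + kap * (s - T))))
             dPhi (fun s => C / (1 + kap * (s - T)) ^ 2)).
    - intros s _. apply is_derive_Phi.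
    - intros s Hs. auto_derive; [nra | field; nra].
    - intros s Hs. pose proof (dPhi_le s ltac:(lra)) as HdPhi. fold C in HdPhi.
      pose proof (HX s Hs). pose proof (X_bounds s).
      assert (HD : 0 < 1 + kap * (s - T)) by nra.
      assert (X s ^ 2 <= (/ (1 + kap * (s - T))) ^ 2) by (apply pow_incr; lra).
      replace (C / (1 + kap * (s - T)) ^ 2) with (C * (/ (1 + kap * (s - T))) ^ 2)
        by (field; lra).
      nra. }
  apply (is_lim_of_nondecreasing_bounded Phi T (Phi T + C / kap)).
  - intros u v Hu Huv. apply Phi_nondecreasing, Huv.
  - intros t Ht. specialize (Hinc t Ht).
    replace (1 + kap * (T - T)) with 1 in Hinc by ring.
    assert (0 <= C / kap / (1 + kap * (t - T))).
    { apply Rdiv_le_0_compat; [apply Rlt_le, Rdiv_lt_0_compat|]; nra. }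
    assert (C / kap / 1 = C / kap) by (field; lra).
    lra.
Qed.

Lemma W_Y_tend_to_0 : is_lim W p_infty 0 /\ is_lim Y p_infty 0.
Proof.
  destruct X_le_inv_affine as [T [kap [HT [Hk HX]]]].
  split.
  - apply (is_lim_0_of_sqr_le_inv_affine W T (8 / 3) kap); [lra | exact Hk|].
    intros t Ht. pose proof (W_sqr_le t). pose proof (HX t Ht). unfold Rdiv. lra.
  - apply (is_lim_0_of_sqr_le_inv_affine Y T 2 kap); [lra | exact Hk|].
    intros t Ht. pose proof (Y_sqr_le_Sm_sqr t). pose proof (Sm_sqr_le t).
    pose proof (X_bounds t). pose proof (HX t Ht). unfold Rdiv. nra.
Qed.

Theorem N2_N3_common_limit :
  exists n0 : R, 0 < n0 /\ is_lim N2 p_infty n0 /\ is_lim N3 p_infty n0.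
Proof.
  destruct Phi_has_limit as [l Hl]. destruct W_Y_tend_to_0 as [HW HY].
  assert (Hln : is_lim (fun t => ln (N2N3 t)) p_infty (l + 0 * / sqrt 3)).
  { apply (is_lim_ext (fun t => Phi t + Y t * / sqrt 3)); [intro t; apply eq_sym, ln_N2N3_eq|].
    apply is_lim_plus'; [exact Hl | exact (is_lim_scal_r Y (/ sqrt 3) p_infty 0 HY)]. }
  assert (Hprod : is_lim N2N3 p_infty (exp (l + 0 * / sqrt 3))).
  { apply (is_lim_ext (fun t => exp (ln (N2N3 t)))); [intro t; apply exp_ln, N2N3_pos|].
    apply (is_lim_comp_continuous _ exp _ _ Hln), continuous_exp. }
  destruct (is_lim_of_diff_prod N2 N3 _ N2_pos N3_pos HW Hprod) as [H2 H3].
  exists (sqrt (exp (l + 0 * / sqrt 3))).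
  split; [apply sqrt_lt_R0, exp_pos | split; assumption].
Qed.

End WainwrightHsuN1Zero.

Theorem mainTheorem9 (N1 N2 N3 Sp Sm : R -> R) :
  WH_solution N1 N2 N3 Sp Sm ->
  WH_constraint N1 N2 N3 Sp Sm ->
  (forall t, N1 t = 0) ->
  (forall t, 0 < N2 t) ->
  (forall t, 0 < N3 t) ->
  (exists t0, Sm t0 ^ 2 + (N2 t0 - N3 t0) ^ 2 > 0) ->
  exists n0 : R, 0 < n0 /\
    is_lim N2 p_infty n0 /\ is_lim N3 p_infty n0.
Proof.
  intros Hsol Hcon HN1 HN2 HN3 [t0 Ht0].
  exact (N2_N3_common_limit N1 N2 N3 Sp Sm Hsol Hcon HN1 HN2 HN3 t0 Ht0).
Qed.
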